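(* Let $n\ge5$ and $c\ge1$. The symmetric group $S_n$ is a quotient of $UW_n(c)$. Moreover, every non-abelian finite quotient $G$ of $UW_n(c)$ satisfies $|G|\ge n!$, and if $|G|=n!$ then $G\cong S_n$; for $n\neq 6$, $S_n$ is the unique (up to isomorphism) quotient of order $n!$, while for $n=6$ there are also the quotients obtained by composing with the exceptional outer automorphism of $S_6$.
   Context: $UV_n(c)$ ($n\ge2$, $c\ge1$) is the group with generators $\rho_i$ ($1\le i\le n-1$), $\sigma_{i,t}$ ($1\le i\le n-1$, $1\le t\le c$) and relations $\rho_i\rho_{i+1}\rho_i=\rho_{i+1}\rho_i\rho_{i+1}$ ($1\le i\le n-2$), $\rho_i\rho_j=\rho_j\rho_i$ ($|i-j|\ge2$), $\rho_i^2=1$, $\sigma_{i,t}\sigma_{j,\ell}=\sigma_{j,\ell}\sigma_{i,t}$ ($|i-j|\ge2$, $1\le t,\ell\le c$), $\sigma_{i,t}\rho_j=\rho_j\sigma_{i,t}$ ($|i-j|\ge2$), $\rho_i\rho_{i+1}\sigma_{i,t}=\sigma_{i+1,t}\rho_i\rho_{i+1}$ ($1\le i\le n-2$, $1\le t\le c$). The universal welded braid group $UW_n(c)$ is the quotient of $UV_n(c)$ by the additional relations $\rho_i\sigma_{i+1,t}\sigma_{i,t}=\sigma_{i+1,t}\sigma_{i,t}\rho_{i+1}$ for all $1\le i\le n-2$, $1\le t\le c$. A quotient of a group means the image of a surjective homomorphism. *)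

From mathcomp Require Import all_boot all_fingroup.
Set Implicit Arguments. Unset Strict Implicit. Unset Printing Implicit Defensive.
Local Open Scope group_scope.

Definition far (i j : nat) : bool := (i.+2 <= j)%N || (j.+2 <= i)%N.

(* The defining relations of UW_n(c), evaluated at elements
   r i  (image of rho_i,       1 <= i <= n-1) and
   s i t (image of sigma_{i,t}, 1 <= i <= n-1, 1 <= t <= c)
   of a group gT.  Values of r, s outside these index ranges are irrelevant. *)
Definition UW_rels (gT : finGroupType) (n c : nat)
    (r : nat -> gT) (s : nat -> nat -> gT) : Prop :=
  (forall i, (1 <= i <= n - 2)%N -> r i * r i.+1 * r i = r i.+1 * r i * r i.+1) /\
      (forall i j, (1 <= i <= n - 1)%N -> (1 <= j <= n - 1)%N -> far i j ->
         r i * r j = r j * r i) /\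
      (forall i, (1 <= i <= n - 1)%N -> r i * r i = 1) /\
      (forall i j t l, (1 <= i <= n - 1)%N -> (1 <= j <= n - 1)%N ->
         (1 <= t <= c)%N -> (1 <= l <= c)%N -> far i j ->
         s i t * s j l = s j l * s i t) /\
      (forall i j t, (1 <= i <= n - 1)%N -> (1 <= j <= n - 1)%N ->
         (1 <= t <= c)%N -> far i j -> s i t * r j = r j * s i t) /\
      (forall i t, (1 <= i <= n - 2)%N -> (1 <= t <= c)%N ->
         r i * r i.+1 * s i t = s i.+1 t * r i * r i.+1) /\
      (forall i t, (1 <= i <= n - 2)%N -> (1 <= t <= c)%N ->
         r i * s i.+1 t * s i t = s i.+1 t * s i t * r i.+1).

Definition UW_gens (gT : finGroupType) (n c : nat)
    (r : nat -> gT) (s : nat -> nat -> gT) : {set gT} :=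
  [set r (val i) | i : 'I_n & (0 < val i)%N]
  :|: [set s (val p.1) (val p.2) | p : 'I_n * 'I_c.+1
                                  & (0 < val p.1)%N && (0 < val p.2)%N].

(* G is a quotient of UW_n(c), i.e. the image of a surjective homomorphism
   UW_n(c) -> G.  By the universal property of the presentation, this is
   the same as a choice of images of the generators in G satisfying the
   defining relations and generating G. *)
Definition UW_quotient (gT : finGroupType) (G : {set gT}) (n c : nat) : Prop :=
  exists (r : nat -> gT) (s : nat -> nat -> gT),
    UW_rels n c r s /\ G = <<UW_gens n c r s>>.

From mathcomp Require Import all_boot all_fingroup all_solvable zify.
Set Implicit Arguments. Unset Strict Implicit. Unset Printing Implicit Defensive.
Local Open Scope group_scope.

(* The relations among the [rho_i] are the Coxeter relations of type
   A_(n-1).  Enumerating cosets of [<rho_1, ..., rho_(n-2)>] bounds the order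
   of any group they generate by [n!], so the subgroup of [S_n * G] generated
   by the pairs [((i, i+1), rho_i)] projects isomorphically onto [S_n]; this
   gives a morphism from [S_n] onto [<rho_i>].  As [n >= 5], its kernel
   either meets [A_n] trivially, hence is trivial and [<rho_i> = S_n] sits
   in [G]; or it contains [A_n], which makes all [rho_i] equal and then the
   remaining relations make [G] abelian. *)

Lemma gen_sub_rmul_closed (gT : finGroupType) (A U : {set gT}) :
  1 \in U -> (forall x a, x \in U -> a \in A -> x * a \in U) -> <<A>> \subset U.
Proof.
move=> U1 UA; apply/subsetP => _ /gen_prodgP [l [a Aa ->]].
elim: l a Aa => [|l IHl] a Aa; first by rewrite big_ord0.
by rewrite big_ord_recr UA ?IHl.
Qed.

Section CoxeterA.
Variable gT : finGroupType.
Implicit Types (M : nat) (g : nat -> gT).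

Definition coxeterA M g : Prop :=
  [/\ forall i, (1 <= i < M)%N -> g i * g i.+1 * g i = g i.+1 * g i * g i.+1,
      forall i j, (1 <= i <= M)%N -> (1 <= j <= M)%N -> far i j -> commute (g i) (g j)
    & forall i, (1 <= i <= M)%N -> g i * g i = 1].

Definition coxeterA_gens M g : {set gT} := [set g (val i) | i : 'I_M.+1 & (0 < val i)%N].

Lemma coxeterA_le M M' g : (M' <= M)%N -> coxeterA M g -> coxeterA M' g.
Proof.
move=> le [braid comm inv]; split.
- by move=> i ?; apply: braid; lia.
- by move=> i j ? ? ?; apply: comm => //; lia.
- by move=> i ?; apply: inv; lia.
Qed.

Lemma mem_coxeterA_gen M g j : (1 <= j <= M)%N -> g j \in <<coxeterA_gens M g>>.
Proof.
move=> jM; have jlt : (j < M.+1)%N by lia.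
by apply/mem_gen/imsetP; exists (Ordinal jlt); rewrite // inE /=; lia.
Qed.

Lemma coxeterA_gensP M g a :
  reflect (exists2 i, (1 <= i <= M)%N & a = g i) (a \in coxeterA_gens M g).
Proof.
apply: (iffP imsetP) => [[[i ilt]] | [i iM ->]].
  by rewrite inE /= => i0 ->; exists i => //; lia.
have ilt : (i < M.+1)%N by lia.
by exists (Ordinal ilt); rewrite // inE /=; lia.
Qed.

(* [top_chain g M k = g M * g (M - 1) * ... * g (M - k + 1)]; for [k <= M]
   these are the coset representatives of [<g 1, ..., g (M - 1)>] in
   [<g 1, ..., g M>]. *)
Fixpoint top_chain g M k : gT :=
  if k is k'.+1 then top_chain g M k' * g (M - k') else 1.

Lemma top_chain_commute M g k i : coxeterA M g -> (1 <= i)%N -> (i + k < M)%N ->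
  commute (g i) (top_chain g M k).
Proof.
case=> _ comm _; elim: k i => [|k IH] i i1 ik /=; first exact: commute1.
apply: commuteM; first by apply: IH; lia.
by apply: comm; rewrite /far; lia.
Qed.

Lemma top_chain_shift M g k i : coxeterA M g -> (k <= M)%N -> (M - k + 2 <= i <= M)%N ->
  top_chain g M k * g i = g i.-1 * top_chain g M k.
Proof.
move=> cox; have [braid comm _] := cox.
elim: k i => [|k IH] i kM iM /=; first lia.
have [{IH}ei|ni] := eqVneq i (M - k).+1; last first.
  have ci : commute (g i) (g (M - k)) by apply: comm; rewrite ?/far; lia.
  by rewrite -mulgA -ci mulgA (IH i) ?mulgA //; lia.
case: k kM iM ei => [|k] kM iM ei /=; first lia.
have -> : (M - k.+1 = i.-1)%N by lia.
have -> : (M - k = i)%N by lia.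
rewrite -!mulgA (mulgA (g i)).
have -> : g i * g i.-1 * g i = g i.-1 * g i * g i.-1.
  have braid_i := braid i.-1; rewrite prednK in braid_i; last lia.
  by rewrite braid_i //; lia.
by rewrite !mulgA -(top_chain_commute cox) //; lia.
Qed.

Definition top_cosets M g : {set gT} :=
  [set p.1 * top_chain g M.+1 (val p.2) | p in setX <<coxeterA_gens M g>> [set: 'I_M.+2]].

Lemma mem_top_cosets M g y k : y \in <<coxeterA_gens M g>> -> (k <= M.+1)%N ->
  y * top_chain g M.+1 k \in top_cosets M g.
Proof.
move=> yK kM; have klt : (k < M.+2)%N by lia.
by apply/imsetP; exists (y, Ordinal klt); rewrite // in_setX yK inE.
Qed.

Lemma top_cosets_rmul M g x i : coxeterA M.+1 g -> x \in top_cosets M g ->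
  (1 <= i <= M.+1)%N -> x * g i \in top_cosets M g.
Proof.
move=> cox /imsetP [[y [k klt]]]; rewrite in_setX inE andbT /= => yK -> iM.
have [_ _ inv] := cox.
have gK j : (1 <= j <= M)%N -> g j \in <<coxeterA_gens M g>> by apply: mem_coxeterA_gen.
case: (ltngtP (i + k) M.+1) => [lt | gt | eq].
- have ci : commute (g i) (top_chain g M.+1 k) by apply: (top_chain_commute cox); lia.
  by rewrite -mulgA -ci mulgA; apply: mem_top_cosets; rewrite ?groupM ?gK //; lia.
- have [ek | nk] := eqVneq (i + k) M.+2.
    case: k klt ek gt => [|k] klt ek gt; first lia.
    rewrite /= -!mulgA (_ : (M.+1 - k)%N = i); last lia.
    by rewrite inv ?mulg1; [apply: mem_top_cosets|]; lia.
  rewrite -mulgA top_chain_shift //; try lia.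
  by rewrite mulgA; apply: mem_top_cosets; rewrite ?groupM ?gK //; lia.
- rewrite -mulgA (_ : i = M.+1 - k)%N; last lia.
  by apply: (mem_top_cosets (k := k.+1) yK); lia.
Qed.

Lemma card_coxeterA_gen M g : coxeterA M g -> (#|<<coxeterA_gens M g>>| <= M.+1`!)%N.
Proof.
elim: M => [|M IH] cox.
  suff -> : coxeterA_gens 0 g = set0 by rewrite gen0 cards1.
  by apply/setP => a; rewrite inE; apply/coxeterA_gensP => [[i]]; lia.
have sub : <<coxeterA_gens M.+1 g>> \subset top_cosets M g.
  apply: gen_sub_rmul_closed => [|x _ xU /coxeterA_gensP [i iM ->]].
    by have := mem_top_cosets (group1 _) (leq0n M.+1); rewrite /= mulg1.
  exact: top_cosets_rmul.
apply: leq_trans (subset_leq_card sub) _; apply: leq_trans (leq_imset_card _ _) _.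
rewrite cardsX cardsT card_ord factS mulnC leq_mul2l IH ?orbT //.
by apply: coxeterA_le cox.
Qed.

End CoxeterA.

Lemma coxeterA_pair (aT rT : finGroupType) M (g1 : nat -> aT) (g2 : nat -> rT) :
  coxeterA M g1 -> coxeterA M g2 -> coxeterA M (fun i => (g1 i, g2 i)).
Proof.
move=> [braid1 comm1 inv1] [braid2 comm2 inv2].
have pairM (x x' : aT) (y y' : rT) : (x, y) * (x', y') = (x * x', y * y') by [].
split=> [i iM | i j iM jM fij | i iM].
- by rewrite !pairM /= braid1 // braid2.
- by rewrite /commute !pairM /= (comm1 _ _ iM jM fij) (comm2 _ _ iM jM fij).
- by rewrite pairM /= inv1 // inv2.
Qed.

Lemma morphim_coxeterA_gen (aT rT : finGroupType) (D : {group aT})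
    (f : {morphism D >-> rT}) M (g : nat -> aT) :
  coxeterA_gens M g \subset D ->
  f @* <<coxeterA_gens M g>> = <<coxeterA_gens M (f \o g)>>.
Proof.
by move=> sgD; rewrite morphim_gen // morphimEsub // /coxeterA_gens -imset_comp.
Qed.

Lemma tperm_braid (T : finType) (a b c : T) : a != b -> b != c -> a != c ->
  tperm a b * tperm b c * tperm a b = tperm b c * tperm a b * tperm b c.
Proof.
move=> ab bc ac.
have tpermJE u v (x : {perm T}) : tperm u v * x * tperm u v = x ^ tperm u v.
  by rewrite conjgE tpermV mulgA.
rewrite !tpermJE !tpermJ tpermL tpermR (tpermD (x := a) (y := b) (z := c)) ?(eq_sym c) //.
by rewrite (tpermD (x := b) (y := c) (z := a)) ?(eq_sym a) // eq_sym.
Qed.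

Lemma tperm_commute (T : finType) (a b c d : T) :
  a != c -> a != d -> b != c -> b != d -> commute (tperm a b) (tperm c d).
Proof.
move=> ac ad bc bd; apply: (perm_onC (tperm_on a b) (tperm_on c d)).
rewrite disjoints_subset; apply/subsetP => x.
by rewrite !inE => /orP [] /eqP ->; rewrite negb_or ?ac ?ad ?bc ?bd.
Qed.

Lemma inord_eqE m a b : (a <= m)%N -> (b <= m)%N ->
  (inord a == inord b :> 'I_m.+1) = (a == b).
Proof. by move=> am bm; rewrite -val_eqE /= !inordK. Qed.

Definition adj_tperm m i : 'S_m.+1 := tperm (inord i.-1) (inord i).

Lemma odd_adj_tperm m i : (1 <= i <= m)%N -> adj_tperm m i.
Proof. by move=> iM; rewrite odd_tperm inord_eqE //; lia. Qed.

Lemma adj_tperm_coxeterA m : coxeterA m (adj_tperm m).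
Proof.
split=> [i iM | i j iM jM | i _]; last exact: tperm2.
  by apply: tperm_braid; rewrite inord_eqE //; lia.
by rewrite /far => fij; apply: tperm_commute; rewrite inord_eqE //; lia.
Qed.

Lemma gen_adj_tperm m : <<coxeterA_gens m (adj_tperm m)>> = [set: 'S_m.+1].
Proof.
apply/eqP; rewrite eqEsubset subsetT -(gen_tperm (inord 0)) gen_subG.
apply/subsetP => _ /imsetP [y _ ->]; rewrite -(inord_val y).
move: (ltn_ord y); rewrite ltnS; elim: (nat_of_ord y) => [|k IH] km.
  by rewrite tperm1 group1.
case: k IH km => [|k] IH km.
  by apply: (mem_coxeterA_gen (adj_tperm m) (j := 1)); lia.
have -> : tperm (inord 0) (inord k.+2) = tperm (inord 0) (inord k.+1) ^ adj_tperm m k.+2.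
  by rewrite tpermJ tpermL tpermD // inord_eqE //; lia.
by rewrite groupJ ?IH ?mem_coxeterA_gen //; lia.
Qed.

(* If [k] moved [x], then for [z] outside [{x, k x}] the commutator
   [k^-1 * k ^ tperm x z] would be a nontrivial even element of [N]. *)
Lemma trivg_normal_Sym_AltI (T : finType) (N : {group {perm T}}) :
  (2 < #|T|)%N -> N <| [set: {perm T}] -> 'Alt_T :&: N = 1 -> N :=: 1.
Proof.
move=> T3 nN tI; apply/trivgP/subsetP => k kN; rewrite inE.
apply/eqP/permP => x; rewrite perm1; apply/eqP/negPn/negP => kx.
have [z] : exists z, z \notin [set x; k x].
  apply/existsP; rewrite -negb_forall; apply/negP => /forallP allin.
  have : (#|T| <= #|[set x; k x]|)%N.
    by rewrite -cardsT; apply/subset_leq_card/subsetP => y _; apply: allin.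
  by rewrite cards2; lia.
rewrite !inE negb_or => /andP [zx zkx].
have tN : tperm x z \in 'N(N) by apply: (subsetP (normal_norm nN)); rewrite inE.
have : k^-1 * k ^ tperm x z \in 'Alt_T :&: N.
  rewrite inE Alt_even odd_permM odd_permV odd_permJ addbb /=.
  by rewrite groupM ?groupV // memJ_norm.
rewrite tI inE -eq_mulVg1 => /eqP ekt.
have xkx : x != k x by rewrite eq_sym.
have kxz : k x != z by rewrite eq_sym.
have := permJ k (tperm x z) x; rewrite -ekt tpermL tpermD //.
by move/perm_inj/eqP; rewrite (negbTE zx).
Qed.

Section CoxeterQuotient.
Variables (gT : finGroupType) (m : nat) (g : nat -> gT).
Hypothesis cox_g : coxeterA m g.

Let W := <<coxeterA_gens m (fun i => (adj_tperm m i, g i))>>%G.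
Let pr1 := restrm (subsetT W) (@fst_morphism 'S_m.+1 gT).
Let pr2 := restrm (subsetT W) (@snd_morphism 'S_m.+1 gT).

Lemma im_graph_fst : pr1 @* W = [set: 'S_m.+1].
Proof.
rewrite morphim_restrm setIid morphim_coxeterA_gen ?subsetT //.
exact: gen_adj_tperm.
Qed.

Lemma im_graph_snd : pr2 @* W = <<coxeterA_gens m g>>.
Proof. by rewrite morphim_restrm setIid morphim_coxeterA_gen ?subsetT. Qed.

Lemma injm_graph_fst : 'injm pr1.
Proof.
have cardW : (#|W| <= m.+1`!)%N.
  exact/card_coxeterA_gen/coxeterA_pair/cox_g/adj_tperm_coxeterA.
rewrite -card_im_injm im_graph_fst cardsT card_Sn eqn_leq.
by have := leq_morphim pr1 W; rewrite im_graph_fst cardsT card_Sn => ->; rewrite cardW.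
Qed.

Lemma normal_graph_ker : pr1 @* 'ker pr2 <| [set: 'S_m.+1].
Proof. by rewrite -im_graph_fst morphim_normal ?ker_normal. Qed.

Lemma coxeterA_isog_of_AltI_ker :
  'Alt_('I_m.+1) :&: pr1 @* 'ker pr2 = 1 -> (1 < m)%N ->
  <<coxeterA_gens m g>> \isog [set: 'S_m.+1].
Proof.
move=> trivAltI m1.
have /eqP : pr1 @* 'ker pr2 :=: 1.
  by apply: trivg_normal_Sym_AltI; rewrite ?normal_graph_ker ?card_ord.
have kerW : 'ker pr2 \subset W by apply/subsetP => x /dom_ker.
rewrite (morphim_injm_eq1 injm_graph_fst kerW) => /eqP ker2.
have injm2 : 'injm pr2 by rewrite ker2.
rewrite -im_graph_snd -im_graph_fst.
apply: isog_trans (sub_isog (subxx _) injm_graph_fst).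
by rewrite isog_sym sub_isog.
Qed.

Lemma coxeterA_const_of_Alt_ker : 'Alt_('I_m.+1) \subset pr1 @* 'ker pr2 ->
  forall i, (1 <= i <= m)%N -> g i = g 1%N.
Proof.
move=> sAltker; have [_ _ inv] := cox_g.
have step i : (1 <= i < m)%N -> g i = g i.+1.
  move=> iM; have : adj_tperm m i * adj_tperm m i.+1 \in pr1 @* 'ker pr2.
    by rewrite (subsetP sAltker) // Alt_even odd_permM !odd_adj_tperm //; lia.
  case/morphimP => w wW wker ew.
  have wE : w = (adj_tperm m i, g i) * (adj_tperm m i.+1, g i.+1).
    apply: (injmP injm_graph_fst) => //.
    by rewrite groupM // mem_coxeterA_gen //; lia.
  have gii1 : g i * g i.+1 = 1 by rewrite -(mker wker) wE.
  by rewrite -[g i]mulg1 -(inv i.+1) ?mulgA ?gii1 ?mul1g //; lia.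
elim=> [|i IH] iM; first lia.
by case: i IH iM => [|i] IH iM //; rewrite -step ?IH //; lia.
Qed.

Lemma coxeterA_quotient : (4 <= m)%N ->
  <<coxeterA_gens m g>> \isog [set: 'S_m.+1] \/ (forall i, (1 <= i <= m)%N -> g i = g 1%N).
Proof.
move=> m4; have /simpleP [_ simpleAlt] : simple 'Alt_('I_m.+1).
  by rewrite simple_Alt5 // card_ord.
case: (simpleAlt _ (normalGI (subsetT _) normal_graph_ker)) => [trivAltI | AltI].
  by left; apply: coxeterA_isog_of_AltI_ker => //; lia.
by right; apply: coxeterA_const_of_Alt_ker; rewrite -AltI subsetIr.
Qed.

End CoxeterQuotient.

Lemma UW_rels_coxeterA (gT : finGroupType) m c (r : nat -> gT) s :
  UW_rels m.+1 c r s -> coxeterA m r.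
Proof.
case=> [braid [comm [inv _]]]; split.
- by move=> i iM; apply: braid; lia.
- by move=> i j iM jM; apply: comm; lia.
- by move=> i iM; apply: inv; lia.
Qed.

(* Once all [r i] equal the involution [a], the relation
   [r i * r i.+1 * s i t = s i.+1 t * r i * r i.+1] makes [s i t] independent
   of [i]; the generators [a] and [s 1 t] then commute because [s 1 t = s 3 t]
   and [a = r 3] are far from index 1. *)
Lemma UW_abelian_of_const (gT : finGroupType) m c (r : nat -> gT) s :
  (3 <= m)%N -> UW_rels m.+1 c r s -> (forall i, (1 <= i <= m)%N -> r i = r 1%N) ->
  abelian <<UW_gens m.+1 c r s>>.
Proof.
move=> m3 [_ [_ [inv [comm_ss [comm_sr [mixed _]]]]]] rE; set a := r 1%N.
have a2 : a * a = 1 by apply: inv; lia.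
have sE i t : (1 <= i <= m)%N -> (1 <= t <= c)%N -> s i t = s 1%N t.
  elim: i => [|i IH] iM tc; first lia.
  case: i IH iM => [|i] IH iM //; rewrite -IH; try lia.
  have := mixed i.+1 t; rewrite !rE -/a; try lia.
  by rewrite a2 mul1g -mulgA a2 mulg1 => e; rewrite e //; lia.
have gensP x : x \in UW_gens m.+1 c r s ->
    x = a \/ exists2 t, (1 <= t <= c)%N & x = s 1%N t.
  case/setUP => /imsetP [[i ilt] /=].
    by rewrite inE /= => i0 ->; left; apply: rE; lia.
  case: i ilt => [i ilt] [t tlt]; rewrite inE /= => /andP [i0 t0] ->.
  by right; exists t; rewrite ?sE //; lia.
have as1 t : (1 <= t <= c)%N -> commute a (s 1%N t).
  have r3 : r 3 = a by apply: rE; lia.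
  by move=> tc; rewrite -r3; symmetry; apply: comm_sr; rewrite ?/far; lia.
have ss1 t l : (1 <= t <= c)%N -> (1 <= l <= c)%N -> commute (s 1%N t) (s 1%N l).
  move=> tc lc; have s3 : s 3 l = s 1%N l by apply: sE; lia.
  by rewrite -s3; apply: comm_ss; rewrite ?/far; lia.
rewrite abelian_gen; apply/centsP => x /gensP [-> | [t tc ->]] y /gensP [-> | [l lc ->]].
- exact: commute_refl.
- exact: as1.
- exact/commute_sym/as1.
- exact: ss1.
Qed.

Lemma UW_quotient_Sym m c : UW_quotient [set: 'S_m.+1] m.+1 c.
Proof.
exists (adj_tperm m), (fun i _ => adj_tperm m i); split; last first.
  apply/eqP; rewrite eqEsubset subsetT -{1}gen_adj_tperm genS //.
  exact: subsetUl.
have [braid comm inv] := adj_tperm_coxeterA m.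
split; [|split; [|split; [|split; [|split; [|split]]]]].
- by move=> i iM; apply: braid; lia.
- by move=> i j iM jM; apply: comm; lia.
- by move=> i iM; apply: inv; lia.
- by move=> i j t l iM jM _ _; apply: comm; lia.
- by move=> i j t iM jM _; rewrite /far => fij; symmetry; apply: comm; rewrite ?/far; lia.
- by move=> i t iM _; apply: braid; lia.
- by move=> i t iM _; apply: braid; lia.
Qed.

Theorem theorem5p12 (n c : nat) (hn : (5 <= n)%N) (hc : (1 <= c)%N) :
  UW_quotient [set: 'S_n] n c /\
  (forall (gT : finGroupType) (G : {group gT}),
      UW_quotient G n c -> ~~ abelian G ->
      (n`! <= #|G|)%N /\ (#|G| = n`! -> G \isog [set: 'S_n])).
Proof.
case: n hn => [|m] // hm; split; first exact: UW_quotient_Sym.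
move=> gT G [r [s [rels ->]]] nonabelian.
have sHG : <<coxeterA_gens m r>> \subset <<UW_gens m.+1 c r s>> by rewrite genS ?subsetUl.
have [isoH | rE] := coxeterA_quotient (UW_rels_coxeterA rels) hm; last first.
  by rewrite UW_abelian_of_const // in nonabelian; lia.
have cardH : #|<<coxeterA_gens m r>>| = m.+1`! by rewrite (card_isog isoH) cardsT card_Sn.
split; first by rewrite -cardH subset_leq_card.
move=> cardG; have -> : <<UW_gens m.+1 c r s>> = <<coxeterA_gens m r>>.
  by symmetry; apply/eqP; rewrite eqEcard sHG cardG cardH leqnn.
exact: isoH.
Qed.
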